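(* For integers $a\ge1$ and $d\ge-1$, \[ \operatorname*{Res}_{z=2}\frac{f_a(z)}{z^2(z-2)^d}\,\mathrm{d}z=\big(-\tfrac12\big)^{a+d+1}, \] where $f_a(z)=\big(-\frac{z(z-1)}{z-2}\frac{\mathrm{d}}{\mathrm{d}z}\big)^a\frac{2-2z}{z-2}$.
   Context: Equivalently, with $x=\frac{z-1}{z^2}$, $f_a(z)=\sum_{\mu\ge1}\binom{2\mu}{\mu}\mu^ax^\mu$; each $f_a$ is a rational function of $z$. *)

(* Rational functions are represented concretely as pairs
   (numerator, denominator) of polynomials over a number field R. *)
From HB Require Import structures.
From mathcomp Require Import all_boot all_order all_algebra.
Set Implicit Arguments. Unset Strict Implicit. Unset Printing Implicit Defensive.
Import Order.TTheory GRing.Theory Num.Theory.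
Local Open Scope ring_scope.

Section RatFun.
Variable R : numFieldType.

Definition ratf := ({poly R} * {poly R})%type.

Definition rmul (f g : ratf) : ratf := (f.1 * g.1, f.2 * g.2).

Definition rderiv (f : ratf) : ratf :=
  (f.1^`() * f.2 - f.1 * f.2^`(), f.2 ^+ 2).

Definition Dop (f : ratf) : ratf :=
  rmul (- ('X * ('X - 1)), 'X - 2%:P) (rderiv f).

Definition f_ (a : nat) : ratf := iter a Dop (2%:P - 2%:P * 'X, 'X - 2%:P).

(* (z-2)^(-d) as a rational function, for d : int *)
Definition invpow_zm2 (d : int) : ratf :=
  match d with
  | Posz n => (1, ('X - 2%:P) ^+ n)
  | Negz n => (('X - 2%:P) ^+ n.+1, 1)
  end.

(* Residue at z = c of the rational function p/q (q != 0): with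
   k = multiplicity of c as a root of q and q = (z-c)^k r,
   Res = 1/(k-1)! * (d/dz)^(k-1) (p/r) evaluated at c  (0 if k = 0). *)
Definition residue (c : R) (f : ratf) : R :=
  let k := mup c f.2 in
  let r := f.2 %/ ('X - c%:P) ^+ k in
  if k is k'.+1 then
    let g := iter k' rderiv (f.1, r) in
    (k'`!%:R)^-1 * (g.1.[c] / g.2.[c])
  else 0.

End RatFun.

From HB Require Import structures.
From mathcomp Require Import all_boot all_order all_algebra.
From mathcomp Require Import ring zify.
Import Order.TTheory GRing.Theory Num.Theory.
Local Open Scope ring_scope.

(* Induction on a gives f_(a+1) = (c z (z-2)^(m+1) + z^2 S) / (z-2)^(m+3) with
   deg S <= m and c = -(-1/2)^a: one more application of -z(z-1)/(z-2) d/dz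
   keeps this shape and multiplies c by -1/2.  After division by z^2 (z-2)^d
   the z^2 S part has no residue at 2 because of the degree bound, while
   c z (z-2)^(m+1) / (z^2 (z-2)^(m+3+d)) = c / (z (z-2)^(d+2)) has residue c times
   the coefficient of (z-2)^(d+1) in 1/z = 1/2 sum_k (-(z-2)/2)^k.
   To evaluate the residue as defined, the numerator is written as
   z^2 (t (z-2)^k + V) modulo (z-2)^(k+1) with deg V < k, so that the iterated
   quotient rule produces t k! at z = 2. *)

Section Residue.
Variables (R : numFieldType) (c : R).
Local Notation w := ('X - c%:P).

Lemma deriv_XsubC_exp n : (w ^+ n.+1)^`() = n.+1%:R * w ^+ n.
Proof. by rewrite deriv_exp derivXsubC mul1r mulr_natl. Qed.

Lemma derivn_XsubC_exp k : (w ^+ k)^`(k) = k`!%:R.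
Proof.
elim: k => [|k IHk]; first by rewrite expr0.
by rewrite derivSn deriv_XsubC_exp mulr_natl derivnMn IHk factS natrM mulr_natl.
Qed.

Lemma iter_rderiv_mod_XsubC (r T : {poly R}) j : forall m (Z : {poly R}),
  exists Z' : {poly R}, iter j (@rderiv R) (r * T + w ^+ (j + m) * Z, r)
    = (r ^+ (2 ^ j) * T^`(j) + w ^+ m * Z', r ^+ (2 ^ j)).
Proof.
elim: j => [|j IHj] m Z; first by exists Z; rewrite /= expr1.
rewrite addSnnS iterS; have [Z' ->] := IHj m.+1 Z; rewrite expnS mulnC exprM.
move: (r ^+ (2 ^ j)) => A.
exists ((m.+1%:R * Z' + w * Z'^`()) * A - w * Z' * A^`()).
rewrite /rderiv /=; congr (_, _).
rewrite derivD !derivM deriv_XsubC_exp exprS; ring.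
Qed.

Lemma residue_principal_part (t : R) (r V Z : {poly R}) k :
  r.[c] != 0 -> (size V <= k)%N ->
  residue c (r * (t%:P * w ^+ k + V) + w ^+ k.+1 * Z, r * w ^+ k.+1) = t.
Proof.
move=> rc0 sV; rewrite /residue /= mupMr /root ?rc0 // mup_XsubCX eqxx.
rewrite mulpK ?expf_neq0 ?polyXsubC_eq0 // -addn1.
have [Z' ->] := iter_rderiv_mod_XsubC r (t%:P * w ^+ k + V) k 1 Z.
rewrite /= derivnD (derivn_poly0 sV) addr0 mul_polyC derivnZ derivn_XsubC_exp.
rewrite hornerD !hornerM hornerXsubC subrr mul0r addr0.
rewrite hornerZ -polyC_natr hornerC.
have k0 : k`!%:R != 0 :> R by rewrite pnatr_eq0 -lt0n fact_gt0.
have rk0 : (r ^+ (2 ^ k)).[c] != 0 by rewrite horner_exp expf_neq0.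
by rewrite [(r ^+ _).[c] * _]mulrC mulfK // mulrC mulfK.
Qed.

End Residue.

(* Lets [ring] use hypotheses: it checks x - y = k1 (a1 - b1) + k2 (a2 - b2). *)
Lemma eq_by_lincomb {V : comNzRingType} (k1 k2 : V) {x y a1 b1 a2 b2 : V} :
  a1 = b1 -> a2 = b2 -> x - y = k1 * (a1 - b1) + k2 * (a2 - b2) -> x = y.
Proof. by move=> -> ->; rewrite !subrr !mulr0 addr0 => /subr0_eq. Qed.

Section SizeBounds.
Context {R : nzRingType}.
Implicit Types p q : {poly R}.

Lemma leq_size_mul {p q a b} :
  (size p <= a)%N -> (size q <= b)%N -> (size (p * q)%R <= (a + b).-1)%N.
Proof. by move=> pa qb; apply: leq_trans (size_polyMleq _ _) _; lia. Qed.

Lemma leq_size_add {p q a} :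
  (size p <= a)%N -> (size q <= a)%N -> (size (p + q)%R <= a)%N.
Proof. by move=> pa qa; apply: leq_trans (size_polyD _ _) _; lia. Qed.

Lemma leq_size_sub {p q a} :
  (size p <= a)%N -> (size q <= a)%N -> (size (p - q)%R <= a)%N.
Proof. by move=> pa qa; apply: leq_size_add; rewrite ?size_polyN. Qed.

Lemma leq_size_deriv {p a} : (size p <= a.+1)%N -> (size p^`() <= a)%N.
Proof. by move=> pa; apply: leq_trans (size_poly _ _) _; lia. Qed.

End SizeBounds.

Section AtTwo.
Variable R : numFieldType.
Implicit Types (c : R) (S U : {poly R}).
Local Notation w := ('X - 2%:P : {poly R}).
Local Notation h := (- 2^-1 : R).

Lemma mul2h : 2 * h = -1.
Proof. by rewrite mulrN mulfV ?pnatr_eq0. Qed.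

Lemma polyC_mul2h : 2%:P * h%:P = -1 :> {poly R}.
Proof. by rewrite -polyCM mul2h polyCN. Qed.

Lemma mulX_geometric_at2 j :
  exists U, (size U <= j)%N /\ 'X * U = 1 - (h%:P * w) ^+ j.
Proof.
elim: j => [|j [U [sU XU]]].
  by exists 0; rewrite size_poly0 mulr0 expr0 subrr.
exists (U - h%:P * (h%:P * w) ^+ j); split.
  apply: leq_size_sub; first exact: leq_trans sU _.
  rewrite exprMn mulrA -exprS -!polyC_exp.
  exact: leq_size_mul (size_polyC_leq1 _) (eq_leq (size_exp_XsubC _ _)).
(* [ring] cannot use 2 * 2^-1 = 1, so h and 2 become atoms related by h2. *)
have h2 := polyC_mul2h; move: h%:P (2%:P : {poly R}) XU h2 => H T XU h2.
apply: (eq_by_lincomb 1 (- (H * ('X - T)) ^+ j) XU h2).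
rewrite exprS; ring.
Qed.

Lemma taylor_split_at2 S c e {j U} : 'X * U = 1 - (h%:P * w) ^+ j ->
  c%:P * ('X * w ^+ e) + 'X^2 * S =
  'X^2 * ((- c * h ^+ j.+1)%:P * w ^+ (e + j) + (S + c%:P * w ^+ e * U))
  + w ^+ (e + j).+1 * ((c * h ^+ j.+1)%:P * 'X).
Proof.
move=> XU; have h2 := polyC_mul2h; rewrite exprMn in XU.
rewrite !exprS !exprD !polyCM polyC_exp.
move: h%:P (2%:P : {poly R}) XU h2 => H T XU h2.
apply: (eq_by_lincomb (- c%:P * 'X * ('X - T) ^+ e)
          (c%:P * H ^+ j * 'X * ('X - T) ^+ e * ('X - T) ^+ j) XU h2).
ring.
Qed.

Lemma residue_at2 c e j S : (size S <= e + j)%N ->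
  residue 2 (c%:P * ('X * w ^+ e) + 'X^2 * S, 'X^2 * w ^+ (e + j).+1)
  = - c * h ^+ j.+1.
Proof.
move=> sS; have [U [sU XU]] := mulX_geometric_at2 j.
rewrite (taylor_split_at2 S c e XU) residue_principal_part //.
  by rewrite hornerXn expf_neq0 ?pnatr_eq0.
apply: leq_size_add => //.
have sCw := leq_size_mul (size_polyC_leq1 c) (eq_leq (size_exp_XsubC e 2)).
exact: leq_size_mul sCw sU.
Qed.

Definition f_form c m S : ratf R :=
  (c%:P * ('X * w ^+ m.+1) + 'X^2 * S, w ^+ m.+3).

Definition f_form_next c m S : {poly R} :=
  c%:P * (2%:P - 3%:P * 'X) * w ^+ (m + m).+3
  - ('X - 1) * w ^+ m.+2 * (2%:P * w * S + 'X * w * S^`() - m.+3%:R * 'X * S).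

Lemma Dop_f_form c m S :
  Dop (f_form (- 2 * c) m S) = f_form c (m + m).+4 (f_form_next c m S).
Proof.
rewrite /Dop /rmul /rderiv /f_form /f_form_next /=; congr (_, _).
  rewrite deriv_XsubC_exp derivD !derivM deriv_XsubC_exp derivC derivX.
  rewrite !exprS !exprD.
  ring.
by rewrite -exprM -exprS; congr (_ ^+ _); lia.
Qed.

Lemma size_f_form_next c m S :
  (size S <= m.+1)%N -> (size (f_form_next c m S) <= (m + m).+4.+1)%N.
Proof.
move=> sS; have sw k : (size (w ^+ k) <= k.+1)%N by rewrite size_exp_XsubC.
have sX : (size ('X : {poly R}) <= 2)%N by rewrite size_polyX.
have sC (b : R) : (size b%:P <= 1)%N := size_polyC_leq1 b.
have sn k : (size (k%:R : {poly R}) <= 1)%N by rewrite -polyC_natr.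
have sX1 : (size ('X - 1 : {poly R})%R <= 2)%N by rewrite -polyC1 size_XsubC.
have sT : (size (2%:P * w * S + 'X * w * S^`() - m.+3%:R * 'X * S)%R <= m.+2)%N.
  apply: leq_size_sub; first apply: leq_size_add.
  - exact: leq_size_mul (leq_size_mul (sC _) (sw 1%N)) sS.
  - exact: leq_size_mul (leq_size_mul sX (sw 1%N)) (leq_size_deriv sS).
  - exact: leq_size_mul (leq_size_mul (sn _) sX) sS.
apply: leq_size_sub.
  have s23 : (size (2%:P - 3%:P * 'X : {poly R})%R <= 2)%N.
    exact: leq_size_sub (leq_trans (sC _) _) (leq_size_mul (sC _) sX).
  exact: leq_size_mul (leq_size_mul (sC c) s23) (sw _).
apply: leq_trans (leq_size_mul (leq_size_mul sX1 (sw _)) sT) _; lia.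
Qed.

Lemma f_eq_form a :
  exists m S, f_ R a.+1 = f_form (- h ^+ a) m S /\ (size S <= m.+1)%N.
Proof.
elim: a => [|a [m [S [fE sS]]]].
  exists 0%N, (-1); split; last by rewrite size_polyN size_poly1.
  rewrite /f_ /Dop /rmul /rderiv /f_form /= expr0; congr (_, _).
  rewrite !(derivD, derivM, derivN, derivC, derivX, derivXsubC); ring.
exists (m + m).+4, (f_form_next (- h ^+ a.+1) m S); split.
  have hE : - h ^+ a = - 2 * (- h ^+ a.+1).
    by rewrite mulrN mulNr opprK exprS mulrA mul2h mulN1r.
  by rewrite -[f_ R a.+2]/(Dop (f_ R a.+1)) fE hE Dop_f_form.
exact: size_f_form_next.
Qed.

Lemma residue_f_form c m S (d : int) : (size S <= m.+1)%N -> -1 <= d ->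
  residue 2 (rmul (f_form c m S) (rmul (1, 'X^2) (invpow_zm2 R d)))
  = - c * h ^ (d + 2).
Proof.
rewrite /rmul /f_form => sS; case: d => [n|[|//]] _ /=.
  rewrite mul1r mulr1 [_ ^+ m.+3 * _]mulrCA -exprD.
  have -> : (m.+3 + n = (m.+1 + n.+1).+1)%N by lia.
  have -> : n%:Z + 2 = n.+2%:Z by lia.
  by rewrite residue_at2 // (leq_trans sS) //; lia.
rewrite mul1r mulr1 [_ ^+ m.+3 * _]mulrC.
have -> : (c%:P * ('X * w ^+ m.+1) + 'X^2 * S) * w ^+ 1
          = c%:P * ('X * w ^+ m.+2) + 'X^2 * (S * w) by rewrite !exprS; ring.
have := residue_at2 c m.+2 0 (S * w); rewrite addn0 => -> //.
by apply: leq_trans (leq_size_mul sS (eq_leq (size_XsubC 2))) _; rewrite addn2.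
Qed.

End AtTwo.

Theorem lemma6p3 (R : numFieldType) (a : nat) (d : int) :
  (1 <= a)%N -> -1 <= d ->
  residue 2 (rmul (f_ R a) (rmul (1, 'X ^+ 2) (invpow_zm2 R d)))
  = (- 2^-1) ^ (a%:Z + d + 1).
Proof.
case: a => // a _ d_ge; have [m [S [-> sS]]] := f_eq_form R a.
rewrite residue_f_form // opprK exprnP -expfzDr ?oppr_eq0 ?invr_eq0 ?pnatr_eq0 //.
by congr (_ ^ _); lia.
Qed.
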